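(* Let $m,k,t$ be positive integers with $t<(m-3)/4$, let $C=\{2i+1\mid 1\leq i\leq t\}\cup\{2t+2\}$, and let $c(x)=1+\sum_{j\in C}(x^j+x^{m-j})\in\mathbb{F}_2[x]$. Then $\gcd(c(x^k),x^m-1)=1$ if and only if $\gcd(m,(2t+3)k)=\gcd(m,(2t+1)k)=\gcd(m,3k)=\gcd(m,k)$.
   Context: All polynomials are over $\mathbb{F}_2$. *)

From HB Require Import structures.
From mathcomp Require Import all_boot all_order all_algebra.
Set Implicit Arguments. Unset Strict Implicit. Unset Printing Implicit Defensive.
Import GRing.Theory.
Local Open Scope ring_scope.

Definition Cset (t : nat) : seq nat :=
  [seq (2 * i + 1)%N | i <- iota 1 t] ++ [:: (2 * t + 2)%N].

Definition cpoly (m t : nat) : {poly 'F_2} :=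
  1 + \sum_(j <- Cset t) ('X^j + 'X^(m - j)).

From HB Require Import structures.
From mathcomp Require Import all_boot all_order all_algebra.
From mathcomp Require Import ring zify.
Set Implicit Arguments. Unset Strict Implicit. Unset Printing Implicit Defensive.
Import GRing.Theory.
Local Open Scope ring_scope.

(* Write G_a(y) = 1 + y + ... + y^(a-1) and y = x^k.
   1. Since y is a unit modulo x^m - 1 and x^m - 1 divides y^m - 1, c(y) is
      coprime to x^m - 1 iff y^(2t+2) c(y), reduced modulo y^m - 1, is; that
      reduction is the "centred" polynomial L(y) (cshift below), in which each
      exponent m - j is replaced by 2t+2 - j.
   2. In characteristic 2, L(y) = G_(2t+3)(y) G_(2t+1)(y) G_3(y); this is a
      polynomial identity, checked after multiplying by (y-1)(y^2-1).
   3. Over any field in which a is nonzero, G_a(x^k) is coprime to x^m - 1 iff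
      gcd(m, ak) = gcd(m, k).  This rests on the divisibility calculus of the
      binomials x^n - 1: x^d - 1 | x^n - 1 iff d | n, and a common divisor of
      x^a - 1 and x^b - 1 divides x^(gcd(a,b)) - 1.
   The theorem combines the three steps with a = 2t+3, 2t+1, 3 (all odd). *)

Definition geosum {R : pzSemiRingType} (x : R) (a : nat) : R := \sum_(i < a) x ^+ i.

Lemma subrX1_add (R : comNzRingType) (x : R) u v :
  x ^+ (u + v) - 1 = x ^+ u * (x ^+ v - 1) + (x ^+ u - 1).
Proof. by rewrite exprD; ring. Qed.

Lemma geosum_mod (R : comNzRingType) (x : R) a :
  geosum x a = a%:R + (x - 1) * \sum_(i < a) geosum x i.
Proof.
have -> : a%:R = \sum_(i < a) (1 : R) by rewrite sumr_const card_ord.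
rewrite mulr_sumr -big_split /=.
by apply: eq_bigr => i _; rewrite -subrX1 addrC subrK.
Qed.

Section PolynomialsOverAField.
Variable F : fieldType.

Lemma dvdp_XnB1 d n : (d %| n)%N -> ('X^d - 1 : {poly F}) %| 'X^n - 1.
Proof.
by move/dvdnP=> [q ->]; rewrite mulnC exprM [X in _ %| X]subrX1 dvdp_mulIl.
Qed.

(* Conversely, for d > 0, x^d - 1 | x^n - 1 forces d | n: x^d - 1 must divide
   x^(n mod d) - 1, which is nonzero and too small unless n mod d = 0. *)
Lemma dvdp_XnB1_dvdn d n : (0 < d)%N ->
  ('X^d - 1 : {poly F}) %| 'X^n - 1 -> (d %| n)%N.
Proof.
move=> d_gt0 dvd_dn.
have dvd_dr : ('X^d - 1 : {poly F}) %| 'X^(n %% d) - 1.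
  move: dvd_dn; rewrite {1}(divn_eq n d) addnC subrX1_add dvdp_addr //.
  by apply: dvdp_mull; apply: dvdp_XnB1; apply: dvdn_mull.
rewrite /dvdn; case r_eq: (n %% d)%N dvd_dr => [//|r] dvd_dr.
have /dvdp_leq : ('X^(r.+1) - 1 : {poly F}) != 0.
  by rewrite -size_poly_gt0 -polyC1 size_XnsubC.
move=> /(_ _ dvd_dr); rewrite -polyC1 !size_XnsubC // ltnS leqNgt -r_eq.
by rewrite ltn_mod d_gt0.
Qed.

(* A common divisor of x^a - 1 and x^b - 1 divides x^(gcd(a,b)) - 1, by a Bezout
   relation u a = v b + gcd(a,b) on the exponents. *)
Lemma dvdp_XnB1_gcdn (p : {poly F}) a b : (0 < a)%N ->
  p %| 'X^a - 1 -> p %| 'X^b - 1 -> p %| 'X^(gcdn a b) - 1.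
Proof.
move=> a_gt0 pa pb; have [u v Euv _] := egcdnP b a_gt0.
have : p %| 'X^(u * a) - 1 by apply: dvdp_trans pa _; apply/dvdp_XnB1/dvdn_mull.
rewrite Euv addnC subrX1_add dvdp_addr //.
by apply: dvdp_mull; apply: dvdp_trans pb _; apply/dvdp_XnB1/dvdn_mull.
Qed.

Lemma coprimep_Xn_XnB1 k m : (0 < m)%N -> coprimep ('X^k : {poly F}) ('X^m - 1).
Proof.
move=> m_gt0; apply: coprimep_expl; rewrite coprimep_sym -[X in coprimep _ X]subr0.
rewrite -polyC0 coprimep_XsubC rootE !hornerE expr0n eqn0Ngt m_gt0 /=.
by rewrite sub0r oppr_eq0 oner_eq0.
Qed.

Lemma coprimep_addr_dvd (p q d : {poly F}) :
  d %| q -> coprimep (p + q) d = coprimep p d.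
Proof.
by move=> dq; rewrite -coprimep_modl modpD (modp_eq0 dq) addr0 coprimep_modl.
Qed.

(* If a is nonzero in F, then G_a(y) is coprime to y - 1 (it is a modulo y - 1). *)
Lemma coprimep_geosum (x : {poly F}) a :
  a%:R != 0 :> F -> coprimep (geosum x a) (x - 1).
Proof.
move=> a_neq0; rewrite geosum_mod mulrC coprimep_addr_dvd ?dvdp_mulIr //.
by rewrite -polyC_natr -alg_polyC coprimepZl // coprime1p.
Qed.

(* Step 3.  If G_a(x^k) and x^m - 1 are coprime, then x^g - 1 with g = gcd(m, ak)
   divides x^(ak) - 1 = (x^k - 1) G_a(x^k) and is coprime to G_a(x^k), so g | k.
   Conversely a common divisor divides x^(gcd(m,ak)) - 1 = x^(gcd(m,k)) - 1, hence
   x^k - 1, which is coprime to G_a(x^k). *)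
Lemma coprimep_geosum_XnB1 a k m : a%:R != 0 :> F -> (0 < m)%N ->
  coprimep (geosum ('X^k : {poly F}) a) ('X^m - 1) = (gcdn m (a * k) == gcdn m k).
Proof.
move=> a_neq0 m_gt0; set G := geosum _ a.
have XakB1 : 'X^(a * k) - 1 = ('X^k - 1) * G by rewrite mulnC exprM subrX1.
have cop_G : coprimep G ('X^k - 1) := coprimep_geosum _ a_neq0.
apply/idP/eqP => [cop_GD | gcd_eq].
  set g := gcdn m (a * k); have g_gt0 : (0 < g)%N by rewrite gcdn_gt0 m_gt0.
  have g_m : ('X^g - 1 : {poly F}) %| 'X^m - 1 by apply/dvdp_XnB1/dvdn_gcdl.
  have : ('X^g - 1 : {poly F}) %| ('X^k - 1) * G.
    by rewrite -XakB1; apply/dvdp_XnB1/dvdn_gcdr.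
  rewrite Gauss_dvdpl; last by rewrite coprimep_sym (coprimep_dvdl g_m).
  move=> /(dvdp_XnB1_dvdn g_gt0) g_k; apply/eqP; rewrite eqn_dvd.
  by rewrite !dvdn_gcd dvdn_gcdl g_k dvdn_gcdl dvdn_mull ?dvdn_gcdr.
apply/coprimepP => d d_G d_D; move/coprimepP: cop_G; apply => //.
have d_ak : d %| 'X^(a * k) - 1 by rewrite XakB1 dvdp_mull.
apply: dvdp_trans (dvdp_XnB1_gcdn m_gt0 d_D d_ak) _.
by rewrite gcd_eq; apply/dvdp_XnB1/dvdn_gcdr.
Qed.

End PolynomialsOverAField.

Definition ceval {R : comNzRingType} (x : R) (m t : nat) : R :=
  1 + \sum_(j <- Cset t) (x ^+ j + x ^+ (m - j)).

Lemma cpoly_comp m t (p : {poly 'F_2}) : cpoly m t \Po p = ceval p m t.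
Proof.
rewrite /cpoly comp_polyD comp_polyC polyC1 raddf_sum; congr (_ + _).
by apply: eq_bigr => j _; rewrite raddfD /= !comp_Xn_poly.
Qed.

Lemma mem_Cset t j : j \in Cset t -> (j <= 2 * t + 2)%N.
Proof.
rewrite mem_cat inE => /orP[/mapP[i] | /eqP -> //].
by rewrite mem_iota => /andP[_ i_le] ->; lia.
Qed.

Definition cshift {R : comNzRingType} (x : R) (t : nat) : R :=
  x ^+ (2 * t + 2) + \sum_(j <- Cset t) (x ^+ (2 * t + 2 + j) + x ^+ (2 * t + 2 - j)).

(* Step 1: x^(2t+2) c(x) = L(x) modulo x^m - 1, as every j in C is at most 2t+2. *)
Lemma ceval_shift (R : comNzRingType) (x : R) m t : (2 * t + 2 <= m)%N ->
  x ^+ (2 * t + 2) * ceval x m t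
  = cshift x t + (x ^+ m - 1) * \sum_(j <- Cset t) x ^+ (2 * t + 2 - j).
Proof.
move=> le_m; rewrite /ceval /cshift mulrDr mulr1 !mulr_sumr -addrA -big_split /=.
congr (_ + _); rewrite !big_seq; apply: eq_bigr => j /mem_Cset le_j.
rewrite mulrDr -!exprD (_ : 2 * t + 2 + (m - j) = (2 * t + 2 - j) + m)%N; last by lia.
by rewrite (exprD x _ m); ring.
Qed.

(* L(x) written out: the odd exponents of C contribute two runs of odd powers,
   both described by the geometric sum G_t(x^2). *)
Lemma cshiftE (R : comNzRingType) (x : R) t :
  cshift x t = x ^+ (2 * t) * x ^+ 2 + (x ^+ (2 * t) * x ^+ 5 + x) * geosum (x ^+ 2) t
             + (x ^+ (2 * t)) ^+ 2 * x ^+ 4 + 1.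
Proof.
rewrite /cshift /Cset big_cat big_map big_seq1 /= big_split /= subnn expr0.
rewrite (_ : iota 1 t = map (addn 1) (index_iota 0 t)); last first.
  by rewrite /index_iota subn0 -iotaDl.
rewrite !big_map !big_mkord /geosum mulrDl !mulr_sumr.
have -> : \sum_(i < t) x ^+ (2 * t + 2 + (2 * (1 + i) + 1))
          = \sum_(i < t) x ^+ (2 * t) * x ^+ 5 * (x ^+ 2) ^+ i.
  by apply: eq_bigr => i _; rewrite -exprM -!exprD; congr (_ ^+ _); lia.
have -> : \sum_(i < t) x ^+ (2 * t + 2 - (2 * (1 + i) + 1))
          = \sum_(i < t) x * (x ^+ 2) ^+ i.
  rewrite (reindex_inj rev_ord_inj); apply: eq_bigr => i _ /=.
  by rewrite -exprM -exprS; congr (_ ^+ _); have := ltn_ord i; lia.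
have -> : x ^+ (2 * t + 2 + (2 * t + 2)) = (x ^+ (2 * t)) ^+ 2 * x ^+ 4.
  by rewrite -exprM -exprD; congr (_ ^+ _); lia.
by rewrite (exprD x (2 * t) 2); ring.
Qed.

Section CharacteristicTwo.
Variable R : idomainType.
Hypothesis charR2 : 2 \in [pchar R].

Lemma natr_odd_neq0 a : odd a -> a%:R != 0 :> R.
Proof. by move=> a_odd; rewrite -(dvdn_pcharf charR2) dvdn2 a_odd. Qed.

(* The identity behind step 2; both sides differ by twice the explicit
   polynomial below. *)
Lemma char2_identity (x y : R) :
  (x - 1) * (x ^+ 2 - 1) * (y * x ^+ 2 + y ^+ 2 * x ^+ 4 + 1)
    + (x - 1) * (y * x ^+ 5 + x) * (y - 1)
  = (y * x ^+ 3 - 1) * (y * x - 1) * ((x + 1) * geosum x 3).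
Proof.
have -> : geosum x 3 = 1 + x + x ^+ 2 by rewrite /geosum !big_ord_recr big_ord0 /= add0r.
set lhs := LHS; set rhs := RHS.
have -> : lhs = rhs + 2%:R * (- x - 2%:R * x ^+ 2 + 2%:R * y * x ^+ 2 + y * x ^+ 3
    + y * x ^+ 4 + 2%:R * y * x ^+ 5 - 2%:R * y ^+ 2 * x ^+ 5 - y ^+ 2 * x ^+ 6).
  by rewrite /lhs /rhs; ring.
by rewrite (pcharf0 charR2) mul0r addr0.
Qed.

(* Step 2: L(x) = G_(2t+3)(x) G_(2t+1)(x) G_3(x) in characteristic 2, for x <> 1;
   multiplying by (x-1)(x^2-1) turns each geometric sum into a binomial. *)
Lemma cshift_factor (x : R) t : x != 1 ->
  cshift x t = geosum x (2 * t + 3) * geosum x (2 * t + 1) * geosum x 3.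
Proof.
move=> x_neq1.
have nz : (x - 1) * (x ^+ 2 - 1) != 0.
  have -> : x ^+ 2 - 1 = (x - 1) * (x + 1) by ring.
  have -> : x + 1 = x - 1 by rewrite (oppr_pchar2 charR2).
  by rewrite !mulf_neq0 // subr_eq0.
apply: (mulfI nz); rewrite cshiftE.
have E_eq : (x ^+ 2 - 1) * geosum (x ^+ 2) t = x ^+ (2 * t) - 1 by rewrite exprM -subrX1.
have Ga_eq : (x - 1) * geosum x (2 * t + 3) = x ^+ (2 * t) * x ^+ 3 - 1.
  by rewrite -subrX1 exprD.
have Gb_eq : (x - 1) * geosum x (2 * t + 1) = x ^+ (2 * t) * x - 1.
  by rewrite -subrX1 exprD expr1.
move: E_eq Ga_eq Gb_eq; set y := x ^+ (2 * t).
set E := geosum _ t; set Ga := geosum x _; set Gb := geosum x _ => E_eq Ga_eq Gb_eq.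
rewrite [LHS](_ : _ = (x - 1) * (x ^+ 2 - 1) * (y * x ^+ 2 + y ^+ 2 * x ^+ 4 + 1)
                     + (x - 1) * (y * x ^+ 5 + x) * ((x ^+ 2 - 1) * E)); last by ring.
rewrite [RHS](_ : _ = ((x - 1) * Ga) * ((x - 1) * Gb) * ((x + 1) * geosum x 3));
  last by ring.
by rewrite E_eq Ga_eq Gb_eq char2_identity.
Qed.

End CharacteristicTwo.

Lemma pchar_F2 : 2 \in [pchar 'F_2].
Proof. exact: pchar_Fp. Qed.

Theorem proposition9 (m k t : nat) (hm : (0 < m)%N) (hk : (0 < k)%N) (ht : (0 < t)%N)
  (htm : (4 * t + 3 < m)%N) :
  coprimep (cpoly m t \Po 'X^k) ('X^m - 1)
  <-> [/\ gcdn m ((2 * t + 3) * k) = gcdn m k,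
          gcdn m ((2 * t + 1) * k) = gcdn m k &
          gcdn m (3 * k) = gcdn m k].
Proof.
set x : {poly 'F_2} := 'X^k; set D : {poly 'F_2} := 'X^m - 1.
have charX2 : 2 \in [pchar {poly 'F_2}] by rewrite pchar_poly pchar_F2.
have x_neq1 : x != 1.
  apply: contraTneq hk => x_eq1; have := size_polyXn 'F_2 k.
  by rewrite -/x x_eq1 size_poly1 => -[<-].
have D_xm : D %| x ^+ m - 1 by rewrite /x -exprM; apply/dvdp_XnB1/dvdn_mull.
have -> : coprimep (cpoly m t \Po x) D = coprimep (x ^+ (2 * t + 2) * ceval x m t) D.
  by rewrite coprimepMl /x -exprM coprimep_Xn_XnB1 // cpoly_comp.
rewrite ceval_shift; last by lia.
rewrite coprimep_addr_dvd ?dvdp_mulr // cshift_factor // !coprimepMl.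
have odd_t3 : odd (2 * t + 3) by rewrite oddD oddM.
have odd_t1 : odd (2 * t + 1) by rewrite oddD oddM.
rewrite !coprimep_geosum_XnB1 ?(natr_odd_neq0 pchar_F2) //.
by split => [/andP[/andP[/eqP -> /eqP ->] /eqP ->] | [-> -> ->]]; rewrite ?eqxx.
Qed.
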